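(* Let $n\ge1$ be an integer, $p\in(0,1)$, $q:=1-p$, and suppose $n\le\frac pq\cdot\frac1{u_{**}}$, where $u_{**}:=\frac{u_*}{1-u_*}$ and $u_*$ is the unique solution in $(0,1)$ of $\ln\frac{1-u}{-\ln u}-1-\frac12\frac{(1+u)\ln u}{1-u}=0$. Define $\tilde Q(x):=Q_n^{\mathrm{LC}}(x)$ for $x\le n$ and $\tilde Q(x):=q_{n-1}^{\,n-x}q_n^{\,x-n+1}$ for $x\ge n-1$ (the two expressions agree on $[n-1,n]$). Then for all $x\in[n,n+\frac12]$, $$Q_n^{\mathrm{Lin}}\Big(x+\frac12\Big)\le\tilde Q(x).$$
   Context: $B_n$ is binomial with parameters $n,p$; $Q_n(x):=\mathbf{P}(B_n\ge x)$ and $q_j:=Q_n(j)$ for $j\in\mathbb{Z}$; $Q_n^{\mathrm{LC}}$ is the least log-concave majorant of $Q_n$ on $\mathbb{R}$ (smallest $g\ge Q_n$ with $g\ge0$ and $\ln g$ concave, values $-\infty$ allowed); $Q_n^{\mathrm{Lin}}$ is the linear interpolation of $Q_n$ over $\mathbb{Z}$: $Q_n^{\mathrm{Lin}}(x)=(1-(x-j))q_j+(x-j)q_{j+1}$ for $j\le x\le j+1$, $j\in\mathbb{Z}$. *)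

From Stdlib Require Import Reals.
From Coquelicot Require Import Coquelicot.
Open Scope R_scope.

Definition Qn (n : nat) (p x : R) : R :=
  sum_f_R0 (fun k => if Rle_dec x (INR k)
                     then Binomial.C n k * p ^ k * (1 - p) ^ (n - k) else 0) n.

Definition qj (n : nat) (p : R) (j : Z) : R := Qn n p (IZR j).

(* g >= 0 and ln g concave (ln 0 = -oo allowed): the concavity inequality
   is only non-trivial when both endpoint values are positive. *)
Definition log_concave (g : R -> R) : Prop :=
  (forall x, 0 <= g x) /\
  (forall x y t, 0 < t < 1 -> 0 < g x -> 0 < g y ->
     exp ((1 - t) * ln (g x) + t * ln (g y)) <= g ((1 - t) * x + t * y)).

Definition LC_majorant (n : nat) (p : R) (g : R -> R) : Prop :=
  log_concave g /\ (forall x, Qn n p x <= g x).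

(* Least log-concave majorant: pointwise infimum of all log-concave
   majorants (which is itself a log-concave majorant). *)
Definition QLC (n : nat) (p x : R) : R :=
  real (Glb_Rbar (fun y => exists g, LC_majorant n p g /\ y = g x)).

Definition QLin (n : nat) (p x : R) : R :=
  let j := Int_part x in
  (1 - (x - IZR j)) * qj n p j + (x - IZR j) * qj n p (j + 1).

(* tilde Q: Q^LC for x <= n, q_{n-1}^{n-x} q_n^{x-n+1} for x >= n-1
   (the two agree on [n-1,n]); we use the second formula on [n-1,+oo). *)
Definition Qtilde (n : nat) (p x : R) : R :=
  if Rle_dec (INR n - 1) x
  then Rpower (qj n p (Z.of_nat n - 1)) (INR n - x)
       * Rpower (qj n p (Z.of_nat n)) (x - INR n + 1)
  else QLC n p x.

Definition ustar_eq (u : R) : R :=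
  ln ((1 - u) / (- ln u)) - 1 - / 2 * ((1 + u) * ln u / (1 - u)).

(* For x = n + s with 0 <= s <= 1/2, the tail beyond n is empty, so the
   interpolation at x + 1/2 is (1/2 - s) q_n, while the geometric
   interpolation between q_(n-1) and q_n gives q_n (q_n / q_(n-1))^s.  The
   bound on n says exactly that q_n / q_(n-1) = p / (p + n (1-p)) >= u_*, so
   it suffices that 1/2 - s <= u_*^s = exp (- s L) with L = - ln u_*.  By
   1 + t <= exp t this holds when L <= 1 or L <= 2 + 2 ln L, and the equation
   defining u_* forces the latter as soon as L >= 1. *)

From Stdlib Require Import Reals.
From Coquelicot Require Import Coquelicot.
From Stdlib Require Import Lra Lia Psatz.
Open Scope R_scope.

Lemma sum_f_R0_last (f : nat -> R) (m : nat) :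
  (forall k, (k < m)%nat -> f k = 0) -> sum_f_R0 f m = f m.
Proof.
  intros Hf; destruct m as [|m]; [reflexivity|].
  rewrite tech5, sum_eq_R0; [ring|].
  intros k Hk; apply Hf; lia.
Qed.

Lemma C_n_n (n : nat) : Binomial.C n n = 1.
Proof.
  unfold Binomial.C; rewrite Nat.sub_diag; change (INR (Factorial.fact 0)) with 1.
  field; apply INR_fact_neq_0.
Qed.

Lemma C_Sn_n (n : nat) : Binomial.C (S n) n = INR (S n).
Proof.
  unfold Binomial.C; replace (S n - n)%nat with 1%nat by lia.
  change (Factorial.fact (S n)) with (S n * Factorial.fact n)%nat.
  rewrite mult_INR; change (INR (Factorial.fact 1)) with 1.
  field; apply INR_fact_neq_0.
Qed.

Lemma Qn_gt (n : nat) (p y : R) : INR n < y -> Qn n p y = 0.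
Proof.
  intros Hy; unfold Qn; apply sum_eq_R0; intros k Hk.
  apply le_INR in Hk.
  destruct (Rle_dec y (INR k)); [lra | reflexivity].
Qed.

Lemma qj_gt (n : nat) (p : R) (j : Z) : (Z.of_nat n < j)%Z -> qj n p j = 0.
Proof.
  intros Hj; apply Qn_gt; rewrite INR_IZR_INZ; apply IZR_lt; exact Hj.
Qed.

Lemma qj_n (n : nat) (p : R) : qj n p (Z.of_nat n) = p ^ n.
Proof.
  unfold qj, Qn; rewrite <- INR_IZR_INZ, sum_f_R0_last.
  - destruct (Rle_dec (INR n) (INR n)) as [_ | H]; [|lra].
    rewrite C_n_n, Nat.sub_diag; ring.
  - intros k Hk; apply lt_INR in Hk.
    destruct (Rle_dec (INR n) (INR k)); [lra | reflexivity].
Qed.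

Lemma qj_pred (m : nat) (p : R) :
  qj (S m) p (Z.of_nat (S m) - 1) = p ^ S m + INR (S m) * p ^ m * (1 - p).
Proof.
  unfold qj, Qn; rewrite minus_IZR, <- INR_IZR_INZ, S_INR.
  replace (INR m + 1 - 1) with (INR m) by ring.
  rewrite tech5, sum_f_R0_last.
  - destruct (Rle_dec (INR m) (INR m)) as [_ | H]; [|lra].
    destruct (Rle_dec (INR m) (INR (S m))) as [_ | H]; [|rewrite S_INR in H; lra].
    rewrite C_Sn_n, C_n_n, Nat.sub_diag.
    replace (S m - m)%nat with 1%nat by lia; rewrite S_INR; cbn [pow]; ring.
  - intros k Hk; apply lt_INR in Hk.
    destruct (Rle_dec (INR m) (INR k)); [lra | reflexivity].
Qed.

Lemma QLin_last_step (n : nat) (p y : R) :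
  INR n <= y <= INR n + 1 -> QLin n p y = (INR n + 1 - y) * p ^ n.
Proof.
  intros Hy; unfold QLin.
  assert (HnZ : IZR (Z.of_nat n) = INR n) by (symmetry; apply INR_IZR_INZ).
  destruct (Rlt_le_dec y (INR n + 1)) as [Hlt | Hge].
  - rewrite <- (Int_part_spec y (Z.of_nat n)) by lra.
    rewrite qj_n, qj_gt, HnZ by lia; ring.
  - rewrite <- (Int_part_spec y (Z.of_nat n + 1)) by (rewrite plus_IZR; lra).
    replace y with (INR n + 1) by lra.
    rewrite !qj_gt by lia; ring.
Qed.

Lemma Qtilde_geometric (n : nat) (p x : R) :
  0 < qj n p (Z.of_nat n - 1) -> 0 < qj n p (Z.of_nat n) -> INR n - 1 <= x ->
  Qtilde n p x =
  qj n p (Z.of_nat n) * Rpower (qj n p (Z.of_nat n) / qj n p (Z.of_nat n - 1)) (x - INR n).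
Proof.
  intros Ha Hb Hx; unfold Qtilde, Rpower.
  destruct (Rle_dec (INR n - 1) x) as [_ | H]; [|lra].
  set (a := qj n p (Z.of_nat n - 1)) in *; set (b := qj n p (Z.of_nat n)) in *.
  rewrite ln_div, <- exp_plus by assumption.
  replace ((INR n - x) * ln a + (x - INR n + 1) * ln b)
    with (ln b + (x - INR n) * (ln b - ln a)) by ring.
  rewrite exp_plus, exp_ln by assumption; reflexivity.
Qed.

Lemma ln_ge_1_sub_inv (w : R) : 0 < w -> 1 - / w <= ln w.
Proof.
  intros Hw.
  pose proof (exp_ineq1_le (- ln w)) as H.
  rewrite exp_Ropp, exp_ln in H by exact Hw; lra.
Qed.

Lemma ustar_eq_root_log_bound (u : R) :
  0 < u < 1 -> ustar_eq u = 0 -> 1 <= - ln u -> - ln u <= 2 + 2 * ln (- ln u).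
Proof.
  intros Hu Heq HL.
  set (L := - ln u) in *.
  set (t := / (1 - u)).
  assert (Ht : 1 <= t).
  { unfold t; rewrite <- Rinv_1; apply Rinv_le_contravar; lra. }
  assert (Hlnw : 1 - t <= ln (1 - u)) by (apply ln_ge_1_sub_inv; lra).
  assert (Hquot : (1 + u) * ln u / (1 - u) = L - 2 * L * t).
  { unfold L, t; field; lra. }
  unfold ustar_eq in Heq; fold L in Heq.
  rewrite ln_div, Hquot in Heq by lra.
  (* now 2 + 2 ln L - L = 2 ln (1 - u) + 2 L (t - 1) >= 2 (L - 1) (t - 1) *)
  assert (Hprod : 0 <= (L - 1) * (t - 1)) by (apply Rmult_le_pos; lra).
  lra.
Qed.

Lemma half_sub_le_Rpower (u s : R) :
  0 < u < 1 -> (1 <= - ln u -> - ln u <= 2 + 2 * ln (- ln u)) -> 0 <= s ->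
  / 2 - s <= Rpower u s.
Proof.
  intros Hu HL Hs.
  assert (Hln : ln u < 0) by (rewrite <- ln_1; apply ln_increasing; lra).
  set (L := - ln u) in *.
  assert (HRp : Rpower u s = exp (- (s * L))) by (unfold Rpower, L; f_equal; ring).
  rewrite HRp.
  pose proof (exp_ineq1_le (- (s * L))) as Hlin.
  destruct (Rle_lt_dec L 1) as [Hsmall | Hbig]; [nra|].
  (* L exp (-sL) = exp (ln L - sL) >= 1 + ln L - sL, and 1 + ln L >= L / 2 *)
  assert (Htan : exp (- (s * L)) * L = exp (ln L - s * L)).
  { rewrite Rminus_def, Rplus_comm, exp_plus, exp_ln; lra. }
  pose proof (exp_ineq1_le (ln L - s * L)).
  specialize (HL (Rlt_le _ _ Hbig)).
  nra.
Qed.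

Lemma binomial_ratio_ge (m : nat) (p u : R) :
  0 < p < 1 -> 0 < u < 1 ->
  INR (S m) <= p / (1 - p) * / (u / (1 - u)) ->
  u <= p ^ S m / (p ^ S m + INR (S m) * p ^ m * (1 - p)).
Proof.
  intros Hp Hu Hn.
  assert (Hpm : 0 < p ^ m) by (apply pow_lt; lra).
  assert (Hnq : 0 < INR (S m) * (1 - p)).
  { apply Rmult_lt_0_compat; [apply lt_0_INR; lia | lra]. }
  replace (p / (1 - p) * / (u / (1 - u))) with (p * (1 - u) / ((1 - p) * u))
    in Hn by (field; lra).
  apply Rle_div_r in Hn; [|nra].
  replace (p ^ S m / (p ^ S m + INR (S m) * p ^ m * (1 - p)))
    with (p / (p + INR (S m) * (1 - p))) by (cbn [pow]; field; split; apply Rgt_not_eq; nra).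
  apply Rle_div_r; nra.
Qed.

Theorem lemma3p6 (n : nat) (p u_star : R) :
  (1 <= n)%nat ->
  0 < p < 1 ->
  0 < u_star < 1 ->
  ustar_eq u_star = 0 ->
  (forall v, 0 < v < 1 -> ustar_eq v = 0 -> v = u_star) ->
  INR n <= p / (1 - p) * / (u_star / (1 - u_star)) ->
  forall x, INR n <= x <= INR n + / 2 ->
    QLin n p (x + / 2) <= Qtilde n p x.
Proof.
  intros Hn Hp Hu Heq _ Hbound x Hx.
  destruct n as [|m]; [lia|].
  assert (Hpm : 0 < p ^ m) by (apply pow_lt; lra).
  assert (Hb : 0 < p ^ S m) by (apply pow_lt; lra).
  assert (Ha : 0 < p ^ S m + INR (S m) * p ^ m * (1 - p)).
  { apply Rplus_lt_0_compat; [exact Hb|].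
    apply Rmult_lt_0_compat; [|lra].
    apply Rmult_lt_0_compat; [apply lt_0_INR; lia | exact Hpm]. }
  rewrite QLin_last_step by lra.
  rewrite Qtilde_geometric, qj_pred, qj_n by (rewrite ?qj_pred, ?qj_n; lra).
  apply Rle_trans with (p ^ S m * Rpower u_star (x - INR (S m))).
  - replace (INR (S m) + 1 - (x + / 2)) with (/ 2 - (x - INR (S m))) by field.
    rewrite Rmult_comm; apply Rmult_le_compat_l; [lra|].
    apply half_sub_le_Rpower; [exact Hu | | lra].
    now apply ustar_eq_root_log_bound.
  - apply Rmult_le_compat_l; [lra|].
    apply Rle_Rpower_l; [lra|].
    split; [lra|]; now apply binomial_ratio_ge.
Qed.
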